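(* Let $\Omega,\Omega'$ be finite words in the letters $\{R_j,T_j:j\ge1\}$. Then $\Phi_\Omega=\Phi_{\Omega'}$ as endomorphisms of $\mathbb Z[x_1,x_2,\dots]$ if and only if $\Omega$ and $\Omega'$ have the same image in the augmented Thompson monoid $\widetilde{\mathrm{Th}}$.
   Context: Operators on $\mathbb Z[x_1,x_2,\dots]$: $R_if=f(x_1,\dots,x_{i-1},0,x_i,x_{i+1},\dots)$ and $T_if=\frac1{x_i}(R_{i+1}f-R_if)$. For a word $\Omega=X_1\cdots X_k$, $\Phi_\Omega=\mathrm{op}(X_1)\circ\cdots\circ\mathrm{op}(X_k)$ where letter $R_j$ maps to the operator $R_j$ and $T_j$ to $T_j$ (empty word gives the identity). The augmented Thompson monoid $\widetilde{\mathrm{Th}}$ is the quotient of the free monoid on letters $\{T_j,R_j:j\ge1\}$ by the relations $T_iT_j=T_jT_{i+1}$ for $i>j$; $T_iR_j=R_jT_{i+1}$ for $i\ge j$; $R_iT_j=T_jR_{i+1}$ for $i>j$; $R_iR_j=R_jR_{i+1}$ for $i\ge j$. *)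

From HB Require Import structures.
From mathcomp Require Import all_boot all_algebra.
From mathcomp Require Import finmap.
From mathcomp Require Import monalg.
From Stdlib Require Import Relations.

Set Implicit Arguments.
Unset Strict Implicit.
Unset Printing Implicit Defensive.

Import GRing.Theory.
Local Open Scope ring_scope.

(* CONVENTION: the variable x_(p+1) of the paper is the monomial  ucm p
   (0-based variable index p). *)
Definition Zx := {malg int[{cmonom nat}]}.

Definition xvar (p : nat) : Zx := << ucm p >>.

Definition subst (s : nat -> Zx) (g : Zx) : Zx :=
  mmap (fun c : int => c%:~R) (fun m : {cmonom nat} =>
    \prod_(p <- finsupp m) s p ^+ (m p)) g.

(* R_(k+1) f = f(x_1, ..., x_k, 0, x_(k+1), x_(k+2), ...):
   the argument in 0-based position p is x_(p+1) if p < k, 0 if p = k,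
   and x_p if p > k. *)
Definition Rop (k : nat) (g : Zx) : Zx :=
  subst (fun p => if (p < k)%N then xvar p else if (p == k)%N then 0 else xvar p.-1) g.

(* exact division by the variable x_(k+1): monomials not divisible by it are
   dropped (only applied to polynomials divisible by x_(k+1)). *)
Definition divX (k : nat) (g : Zx) : Zx :=
  \sum_(m <- msupp g | (0 < m k)%N) << g@_m *g divcm m (ucm k) >>.

(* T_(k+1) f = (R_(k+2) f - R_(k+1) f) / x_(k+1) *)
Definition Top (k : nat) (g : Zx) : Zx := divX k (Rop k.+1 g - Rop k g).

(* Letters: Rl k stands for R_(k+1), Tl k stands for T_(k+1). *)
Inductive letter : Type := Rl of nat | Tl of nat.

Definition op (l : letter) : Zx -> Zx :=
  match l with Rl k => Rop k | Tl k => Top k end.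

Definition Phi (w : seq letter) : Zx -> Zx :=
  foldr (fun l acc => op l \o acc) id w.

(* Defining relations of the augmented Thompson monoid (index-shift
   invariant, so they read the same with 0-based indices). *)
Inductive threl : seq letter -> seq letter -> Prop :=
| relTT i j : (j < i)%N -> threl [:: Tl i; Tl j] [:: Tl j; Tl i.+1]
| relTR i j : (j <= i)%N -> threl [:: Tl i; Rl j] [:: Rl j; Tl i.+1]
| relRT i j : (j < i)%N -> threl [:: Rl i; Tl j] [:: Tl j; Rl i.+1]
| relRR i j : (j <= i)%N -> threl [:: Rl i; Rl j] [:: Rl j; Rl i.+1].

Definition thstep (a b : seq letter) : Prop :=
  exists u v l r, threl l r /\ a = u ++ l ++ v /\ b = u ++ r ++ v.

(* two words have the same image in the augmented Thompson monoid iff they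
   are equivalent for the monoid congruence generated by threl *)
Definition th_equiv : seq letter -> seq letter -> Prop :=
  clos_refl_sym_trans _ thstep.

(* Every letter sends a monomial x^a either to 0 or to a signed monomial +-x^b,
   where b, the sign and the vanishing are read off the exponent vector a: R_k
   deletes the k-th exponent when it is 0 and kills x^a otherwise, while T_k
   merges the exponents at k and k+1 and lowers the result by one when exactly
   one of them is 0 (with sign - when it is the first one).  Since Phi_Omega is
   additive, Phi_Omega = Phi_Omega' iff the two words induce the same signed
   partial action on finitely supported exponent vectors.  This action satisfies
   the Thompson relations.  Conversely, pushing letters to the right with the
   relations brings every word to a normal form, and distinct normal forms act
   differently: peeling letters off from the right, preimages of the last letter
   produce an exponent vector on which exactly one of them is defined. *)

From HB Require Import structures.
From mathcomp Require Import all_boot all_algebra finmap monalg zify.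
From Stdlib Require Import FunctionalExtensionality Relations.

Set Implicit Arguments.
Unset Strict Implicit.
Unset Printing Implicit Defensive.

(** * Signed action on exponent vectors *)

Definition drop_at (k : nat) (a : nat -> nat) : nat -> nat :=
  fun p => if p < k then a p else a p.+1.

(* The [.-1] is the division by [x_(k+1)] in [T_(k+1)]. *)
Definition merge_at (k : nat) (a : nat -> nat) : nat -> nat :=
  fun p => if p < k then a p
           else if p == k then (a k + a k.+1).-1 else a p.+1.

(* [Some (s, b)] encodes the monomial [(-1)^s x^b], [None] encodes [0]. *)
Definition letter_act (l : letter) (a : nat -> nat) : option (bool * (nat -> nat)) :=
  match l with
  | Rl k => if a k == 0 then Some (false, drop_at k a) else None
  | Tl k => if a k == 0 then
              if a k.+1 == 0 then None else Some (true, merge_at k a)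
            else if a k.+1 == 0 then Some (false, merge_at k a) else None
  end.

Definition sbind (r : option (bool * (nat -> nat)))
    (F : (nat -> nat) -> option (bool * (nat -> nat))) : option (bool * (nat -> nat)) :=
  if r is Some (s, b) then
    if F b is Some (s', c) then Some (s (+) s', c) else None
  else None.

Definition word_act (w : seq letter) (a : nat -> nat) : option (bool * (nat -> nat)) :=
  foldr (fun l r => sbind r (letter_act l)) (Some (false, a)) w.

Lemma sbindA r F G : sbind (sbind r F) G = sbind r (fun b => sbind (F b) G).
Proof.
case: r => [[s b]|] //=; case: (F b) => [[s' c]|] //=.
by case: (G c) => [[s'' d]|] //=; rewrite addbA.
Qed.

Lemma sbind_ret r : sbind r (fun b => Some (false, b)) = r.
Proof. by case: r => [[s b]|] //=; rewrite addbF. Qed.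

Lemma ret_sbind a F : sbind (Some (false, a)) F = F a.
Proof. by rewrite /=; case: (F a) => [[s b]|]. Qed.

Lemma word_act_cat u v a : word_act (u ++ v) a = sbind (word_act v a) (word_act u).
Proof.
elim: u a => [|l u IH] a /=; first by rewrite sbind_ret.
by rewrite IH sbindA.
Qed.

Lemma word_act_rcons w l a :
  word_act (rcons w l) a = sbind (letter_act l a) (word_act w).
Proof.
rewrite -cats1 word_act_cat /=.
by congr sbind; case: (letter_act l a) => [[s b]|].
Qed.

Ltac decide_ifs :=
  repeat (rewrite /merge_at /drop_at /=; first
    [ match goal with |- context [if ?c then _ else _] =>
        let E := fresh "E" in
        first [ have E : c = true by lia | have E : c = false by lia ]; rewrite E
      end
    | match goal with |- context [if ?c then _ else _] =>
        let E := fresh "E" in case E : c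
      end ]).

Ltac decide_pointwise :=
  apply: functional_extensionality => p; decide_ifs;
  repeat match goal with E : (_ == _) = true |- _ => move/eqP: E => E; subst end;
  try lia; f_equal; lia.

Lemma threl_act l r : threl l r -> word_act l =1 word_act r.
Proof.
case=> i j lt_ji a; decide_ifs; try (exfalso; lia); try done.
all: by congr (Some (_, _)); decide_pointwise.
Qed.

Lemma th_equiv_act w w' : th_equiv w w' -> word_act w =1 word_act w'.
Proof.
elim=> [x y [u [v [l [r [lr [-> ->]]]]]] a | // | x y _ IH a | x y z _ IH1 _ IH2 a].
- by rewrite !word_act_cat (functional_extensionality _ _ (threl_act lr)).
- by rewrite IH.
- by rewrite IH1 IH2.
Qed.

Lemma drop_at_succ k a : a k = a k.+1 -> drop_at k a =1 drop_at k.+1 a.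
Proof. by move=> akk i; case: (ltngtP i k) => [lt|gt|->]; decide_ifs; rewrite ?akk. Qed.

Lemma merge_at_drop k a :
  a k = 0 -> merge_at k a =1 (fun i => drop_at k a i - (k == i)).
Proof. by move=> ak i; case: (ltngtP i k) => [lt|gt|->]; decide_ifs; lia. Qed.

Lemma merge_at_drop_succ k a :
  a k.+1 = 0 -> merge_at k a =1 (fun i => drop_at k.+1 a i - (k == i)).
Proof. by move=> ak i; case: (ltngtP i k) => [lt|gt|->]; decide_ifs; lia. Qed.

(** * Normal forms *)

Definition lidx (l : letter) : nat := match l with Rl k | Tl k => k end.
Definition is_T (l : letter) : bool := if l is Tl _ then true else false.
Definition lbound (l : letter) : nat := lidx l + is_T l.
Definition shift_letter (l : letter) : letter :=
  match l with Rl k => Rl k.+1 | Tl k => Tl k.+1 end.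

(* [nf_ok X Y] holds exactly when [X Y] is not the left-hand side of a defining
   relation. *)
Definition nf_ok (X Y : letter) : bool := lidx X < lbound Y.

Fixpoint nf_insert (X : letter) (N : seq letter) : seq letter :=
  if N is Y :: N' then
    if nf_ok X Y then X :: N else Y :: nf_insert (shift_letter X) N'
  else [:: X].

Definition nf (w : seq letter) : seq letter := foldr nf_insert [::] w.

Lemma threl_nf_ok X Y : ~~ nf_ok X Y -> threl [:: X; Y] [:: Y; shift_letter X].
Proof.
case: X => i; case: Y => j; rewrite /nf_ok /lbound /= => h.
- by apply: relRR; lia.
- by apply: relRT; lia.
- by apply: relTR; lia.
- by apply: relTT; lia.
Qed.

Lemma th_equiv_cons X w w' : th_equiv w w' -> th_equiv (X :: w) (X :: w').
Proof.
elim=> [x y [u [v [l [r [lr [-> ->]]]]]] | x | x y _ IH | x y z _ IH1 _ IH2].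
- by apply: rst_step; exists (X :: u), v, l, r.
- exact: rst_refl.
- exact: rst_sym IH.
- exact: rst_trans IH1 IH2.
Qed.

Lemma th_equiv_nf_insert X N : th_equiv (X :: N) (nf_insert X N).
Proof.
elim: N X => [|Y N IH] X /=; first exact: rst_refl.
case: ifP => okXY; first exact: rst_refl.
apply: rst_trans (th_equiv_cons Y (IH (shift_letter X))).
apply: rst_step; exists [::], N, [:: X; Y], [:: Y; shift_letter X].
by split=> //; apply: threl_nf_ok; rewrite okXY.
Qed.

Lemma th_equiv_nf w : th_equiv w (nf w).
Proof.
elim: w => [|X w IH] /=; first exact: rst_refl.
exact: rst_trans (th_equiv_cons X IH) (th_equiv_nf_insert X (nf w)).
Qed.

Lemma nf_ok_shift X Y : ~~ nf_ok X Y -> nf_ok Y (shift_letter X).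
Proof. by case: X => i; case: Y => j; rewrite /nf_ok /lbound /=; lia. Qed.

Lemma path_nf_insert W Z N :
  nf_ok W Z -> path nf_ok W N -> path nf_ok W (nf_insert Z N).
Proof.
elim: N W Z => [|Y N IH] W Z /=; first by move=> ->.
move=> okWZ /andP [okWY pathYN]; case: ifP => okZY /=.
- by rewrite okWZ okZY pathYN.
- by rewrite okWY /=; apply: IH => //; apply: nf_ok_shift; rewrite okZY.
Qed.

Lemma sorted_nf_insert Z N : sorted nf_ok N -> sorted nf_ok (nf_insert Z N).
Proof.
case: N => [|Y N] //= pathYN; case: ifP => okZY /=; first by rewrite okZY.
by apply: path_nf_insert => //; apply: nf_ok_shift; rewrite okZY.
Qed.

Lemma sorted_nf w : sorted nf_ok (nf w).
Proof. by elim: w => [|X w IH] //=; apply: sorted_nf_insert. Qed.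

(** * Distinct normal forms act differently *)

Definition fin_supp (a : nat -> nat) : Prop :=
  exists B, forall p, B <= p -> a p = 0.

Lemma fin_supp_shift a c K :
  fin_supp c -> (forall p, K <= p -> a p = c p.-1) -> fin_supp a.
Proof. by move=> [B cB] ac; exists (B + K).+1 => p le_p; rewrite ac ?cB //; lia. Qed.

Definition insert_zero_at (k : nat) (c : nat -> nat) : nat -> nat :=
  fun p => if p < k then c p else if p == k then 0 else c p.-1.

Definition unmerge_at (s : bool) (k : nat) (c : nat -> nat) : nat -> nat :=
  fun p => if p < k then c p
           else if p == k then (if s then 0 else (c k).+1)
           else if p == k.+1 then (if s then (c k).+1 else 0) else c p.-1.

Definition letter_preimage (X : letter) (c : nat -> nat) : nat -> nat :=
  match X with Rl k => insert_zero_at k c | Tl k => unmerge_at false k c end.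

Lemma letter_act_unmerge s k c : letter_act (Tl k) (unmerge_at s k c) = Some (s, c).
Proof.
by case: s; rewrite /unmerge_at; decide_ifs; congr (Some (_, _));
  decide_pointwise.
Qed.

Lemma letter_act_preimage X c : letter_act X (letter_preimage X c) = Some (false, c).
Proof.
case: X => k; last exact: letter_act_unmerge.
rewrite /= /insert_zero_at ltnn eqxx /=; congr (Some (_, _)); decide_pointwise.
Qed.

Lemma letter_preimage_lbound X c : letter_preimage X c (lbound X) = 0.
Proof. by case: X => k; rewrite /lbound /= /insert_zero_at /unmerge_at; decide_ifs. Qed.

Lemma letter_preimage_gt X c p : lbound X < p -> letter_preimage X c p = c p.-1.
Proof.
by case: X => k; rewrite /lbound /= /insert_zero_at /unmerge_at => ?; decide_ifs.
Qed.

Lemma fin_supp_unmerge s k c : fin_supp c -> fin_supp (unmerge_at s k c).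
Proof.
by move/(fin_supp_shift (K := k.+2)); apply=> p ?; rewrite /unmerge_at; decide_ifs.
Qed.

Lemma fin_supp_preimage X c : fin_supp c -> fin_supp (letter_preimage X c).
Proof.
by move/(fin_supp_shift (K := (lbound X).+1)); apply=> p; apply: letter_preimage_gt.
Qed.

Lemma word_act_rcons_preimage H X c :
  word_act (rcons H X) (letter_preimage X c) = word_act H c.
Proof. by rewrite word_act_rcons letter_act_preimage ret_sbind. Qed.

Lemma letter_act_rcons_defined H X a :
  word_act (rcons H X) a <> None -> letter_act X a <> None.
Proof. by rewrite word_act_rcons; case: (letter_act X a). Qed.

Lemma nf_ok_lidx_le X Y : nf_ok X Y -> lidx X <= lidx Y.
Proof. by case: X => i; case: Y => j; rewrite /nf_ok /lbound /=; lia. Qed.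

Lemma sorted_rcons_nf_ok H X : sorted nf_ok (rcons H X) ->
  sorted nf_ok H /\ all (fun Y => lidx Y < lbound X) H.
Proof.
elim: H => [|Y H IH] //= pathYHX.
have [sH boundH] := IH (path_sorted pathYHX); split.
  by move: pathYHX; rewrite rcons_path => /andP [].
rewrite boundH andbT; case: H {IH sH} boundH pathYHX => [|Z H] /=.
- by rewrite andbT.
- by move=> /andP [ltZ _] /andP [/nf_ok_lidx_le le_YZ _]; apply: leq_ltn_trans ltZ.
Qed.

Lemma sorted_rcons_lidx_bound H X : sorted nf_ok (rcons H X) ->
  all (fun Y => lidx Y < (lidx X).+1) (rcons H X).
Proof.
move=> /sorted_rcons_nf_ok [_ boundH]; rewrite all_rcons ltnSn /=.
by apply: sub_all boundH => Y /=; case: X => k; rewrite /lbound /=; lia.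
Qed.

(* Undoing the last letter of a normal form by [letter_preimage] only shifts the
   exponents beyond [lbound], so exponents beyond the bound [B] of all indices
   can be prescribed. *)
Lemma sorted_witness_nz N B p : sorted nf_ok N -> all (fun Y => lidx Y < B) N ->
  B <= p -> exists2 a, fin_supp a & word_act N a <> None /\ a p <> 0.
Proof.
elim/last_ind: N B p => [|H X IH] B p sN boundHX le_p.
  exists (fun q => nat_of_bool (q == p)); last by rewrite eqxx.
  by exists p.+1 => q; case: eqP; lia.
have [sH boundH] := sorted_rcons_nf_ok sN.
have ltX : lidx X < B by move: boundHX; rewrite all_rcons => /andP [].
case: (ltngtP (lbound X) p) => [lt_p | gt_p | eq_p].
- have [c fc [defc nzc]] := IH _ p.-1 sH boundH ltac:(lia).
  exists (letter_preimage X c); first exact: fin_supp_preimage.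
  by rewrite word_act_rcons_preimage letter_preimage_gt.
- by case: X ltX gt_p {sN boundHX boundH} => k; rewrite /lbound /=; lia.
- have [c fc [defc _]] := IH _ _ sH boundH (leqnn _).
  case: X ltX eq_p {sN boundHX boundH} => k; rewrite /lbound /= => ltk eq_p; first lia.
  exists (unmerge_at true k c); first exact: fin_supp_unmerge.
  rewrite word_act_rcons letter_act_unmerge /=; split.
    by case: (word_act H c) defc => [[]|].
  by rewrite -eq_p addn1 /unmerge_at; decide_ifs.
Qed.

Lemma sorted_witness_zero N B p : sorted nf_ok N -> all (fun Y => lidx Y < B) N ->
  B <= p -> exists2 a, fin_supp a & [/\ word_act N a <> None, a p = 0 & a p.+1 = 0].
Proof.
elim/last_ind: N B p => [|H X IH] B p sN boundHX le_p.
  by exists (fun=> 0); first by exists 0.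
have [sH boundH] := sorted_rcons_nf_ok sN.
have ltX : lidx X < B by move: boundHX; rewrite all_rcons => /andP [].
have le_Xp : lbound X <= p.
  by case: X ltX {sN boundHX boundH} => k; rewrite /lbound /=; lia.
case: (ltngtP (lbound X) p) le_Xp => // [lt_p | eq_p] _.
- have [c fc [defc c0 c1]] := IH _ p.-1 sH boundH ltac:(lia).
  exists (letter_preimage X c); first exact: fin_supp_preimage.
  rewrite word_act_rcons_preimage !letter_preimage_gt; try lia.
  by have -> : p.+1.-1 = p.-1.+1 by lia.
- have [c fc [defc c0 _]] := IH _ _ sH boundH (leqnn _).
  exists (letter_preimage X c); first exact: fin_supp_preimage.
  by rewrite word_act_rcons_preimage -eq_p letter_preimage_lbound letter_preimage_gt.
Qed.

Lemma agree_last_lidx_lt N H X B : sorted nf_ok N -> all (fun Y => lidx Y < B) N ->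
  (forall a, fin_supp a -> word_act N a = word_act (rcons H X) a) -> lidx X < B.
Proof.
move=> sN boundN agree; rewrite ltnNge; apply/negP; case: X agree => k agree /= le_k.
- have [a fa [defa nza]] := sorted_witness_nz sN boundN le_k.
  rewrite agree // in defa; move/letter_act_rcons_defined: defa => /=.
  by case: eqP.
- have [a fa [defa a0 a1]] := sorted_witness_zero sN boundN le_k.
  rewrite agree // in defa; move/letter_act_rcons_defined: defa => /=.
  by rewrite a0 a1.
Qed.

Lemma disagree_last_T_R H H' k : sorted nf_ok (rcons H (Tl k)) ->
  ~ (forall a, fin_supp a -> word_act (rcons H (Tl k)) a = word_act (rcons H' (Rl k)) a).
Proof.
move=> /sorted_rcons_nf_ok [sH boundH] agree.
have [c fc [defc _]] := sorted_witness_nz sH boundH (leqnn _).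
have : word_act (rcons H' (Rl k)) (letter_preimage (Tl k) c) <> None.
  by rewrite -agree ?word_act_rcons_preimage //; apply: fin_supp_preimage.
by move/letter_act_rcons_defined; rewrite /= /unmerge_at ltnn eqxx.
Qed.

Lemma agree_last_letter H X H' X' :
  sorted nf_ok (rcons H X) -> sorted nf_ok (rcons H' X') ->
  (forall a, fin_supp a -> word_act (rcons H X) a = word_act (rcons H' X') a) ->
  X = X'.
Proof.
move=> sN sN' agree.
have agree' a : fin_supp a -> word_act (rcons H' X') a = word_act (rcons H X) a.
  by move=> fa; rewrite agree.
have := agree_last_lidx_lt sN (sorted_rcons_lidx_bound sN) agree.
have := agree_last_lidx_lt sN' (sorted_rcons_lidx_bound sN') agree'.
case: X X' sN sN' agree agree' => i [] j sN sN' agree agree' /= le1 le2;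
  (have eij : i = j by lia); subst j.
- by [].
- by case: (disagree_last_T_R sN' agree').
- by case: (disagree_last_T_R sN agree).
- by [].
Qed.

Lemma sorted_word_act_inj N N' : sorted nf_ok N -> sorted nf_ok N' ->
  (forall a, fin_supp a -> word_act N a = word_act N' a) -> N = N'.
Proof.
elim/last_ind: N N' => [|H X IH] N'; case/lastP: N' => [|H' X'] // sN sN' agree.
- by move: (agree_last_lidx_lt (B := 0) sN isT agree); rewrite ltn0.
- have agree' a : fin_supp a -> word_act [::] a = word_act (rcons H X) a.
    by move=> fa; rewrite agree.
  by move: (agree_last_lidx_lt (B := 0) sN' isT agree'); rewrite ltn0.
have eX := agree_last_letter sN sN' agree; subst X'; congr rcons.
have [sH _] := sorted_rcons_nf_ok sN; have [sH' _] := sorted_rcons_nf_ok sN'.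
apply: IH => // c fc.
rewrite -(word_act_rcons_preimage H X) -(word_act_rcons_preimage H' X).
exact/agree/fin_supp_preimage.
Qed.

(** * The operators on monomials *)

Lemma drop_atE k a i : drop_at k a i = a (bump k i).
Proof. by rewrite /drop_at /bump; case: ltnP; rewrite ?add0n ?add1n. Qed.

Lemma unbump_eq k p i : p != k -> (unbump k p == i) = (p == bump k i).
Proof.
by move=> pk; apply/eqP/eqP => [<-|->]; rewrite ?bumpK // unbumpK // inE.
Qed.

Lemma if_unbump T (f : nat -> T) (z : T) k p : p != k ->
  (if p < k then f p else if p == k then z else f p.-1) = f (unbump k p).
Proof. by rewrite /unbump; case: ltngtP => //= _ _; rewrite ?subn0 ?subn1. Qed.

Lemma sum_pred1_uniq (r : seq nat) (F : nat -> nat) u : uniq r ->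
  \sum_(p <- r | p == u) F p = if u \in r then F u else 0.
Proof.
move=> ur; case: ifP => ru.
  by rewrite -big_filter (filter_pred1_uniq ur ru) big_seq1.
by rewrite big1_seq // => p /andP [/eqP -> ]; rewrite ru.
Qed.

Import GRing.Theory.
Local Open Scope ring_scope.

Lemma monomUM (m1 m2 : {cmonom nat}) : (<< m1 >> : Zx) * << m2 >> = << mmul m1 m2 >>.
Proof. by rewrite malgM_def fgmulUU mulr1. Qed.

(* Equalities between monomials of [Zx] are closed by [reflexivity]: [done] would
   first attempt expensive conversions of the monoid-algebra terms. *)
Lemma xvar_expn q n : exists2 M : {cmonom nat},
  forall i, M i = (n * (q == i))%N & xvar q ^+ n = << M >>.
Proof.
elim: n => [|n [M eM eX]].
  by exists (mone : {cmonom nat}) => [i|]; rewrite ?cm1 // expr0 -mpolyC1E.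
exists (mmul (ucm q) M) => [i|]; first by rewrite cmM eM ucmE mulSn.
by rewrite exprS eX /xvar monomUM; reflexivity.
Qed.

Lemma prod_xvar_expn (r : seq nat) (g e : nat -> nat) : exists2 M : {cmonom nat},
  forall i, M i = (\sum_(p <- r | g p == i) e p)%N &
  \prod_(p <- r) xvar (g p) ^+ e p = << M >>.
Proof.
elim: r => [|q r [M eM eX]].
  by exists (mone : {cmonom nat}) => [i|]; rewrite ?cm1 big_nil // -mpolyC1E.
have [P eP eY] := xvar_expn (g q) (e q).
exists (mmul P M) => [i|]; last by rewrite big_cons eX eY monomUM; reflexivity.
by rewrite cmM eP eM big_cons; case: eqP; rewrite ?muln1 ?muln0.
Qed.

Lemma cmonom_of_fin_supp a : fin_supp a -> exists M : {cmonom nat}, M =1 a.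
Proof.
move=> [B aB]; have [M eM _] := prod_xvar_expn (iota 0 B) id a.
exists M => i; rewrite eM sum_pred1_uniq ?iota_uniq // mem_iota add0n /=.
by case: ltnP => // /aB ->.
Qed.

Lemma fin_supp_cmonom (m : {cmonom nat}) : fin_supp m.
Proof.
exists (\max_(p <- finsupp m) p.+1)%N => p le_p; apply/eqP; rewrite cmE_eq0.
apply: contraTN le_p => pm.
by rewrite -ltnNge (@leq_bigmax_seq _ _ xpredT (fun q => q.+1) _ pm).
Qed.

Definition signed (s : bool) (g : Zx) : Zx := if s then - g else g.

Definition represents (r : option (bool * (nat -> nat))) (g : Zx) : Prop :=
  if r is Some (s, b) then exists2 m : {cmonom nat}, m =1 b & g = signed s << m >>
  else g = 0.

Lemma subst_monom s (m : {cmonom nat}) :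
  subst s << m >> = \prod_(p <- finsupp m) s p ^+ m p.
Proof. by rewrite /subst mmapU mul1r. Qed.

Lemma Rop_monom k (m : {cmonom nat}) :
  represents (letter_act (Rl k) m) (Rop k << m >>).
Proof.
rewrite /= /Rop subst_monom; case: eqP => [mk0 | /eqP mk]; last first.
  rewrite (big_rem k) -?cmE_neq0 //= ltnn eqxx expr0n (negPf mk) mul0r.
  reflexivity.
have km : k \notin finsupp m by rewrite -cmE_eq0 mk0.
rewrite (eq_big_seq (fun p => xvar (unbump k p) ^+ m p)); last first.
  move=> p pm; rewrite if_unbump //; apply: contraNneq km => <-; exact: pm.
have [M eM ->] := prod_xvar_expn (finsupp m) (unbump k) m.
exists M => // i; rewrite eM big_seq_cond.
rewrite (eq_bigl (fun p => (p \in finsupp m) && (p == bump k i))); last first.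
  move=> p; case pm: (p \in finsupp m) => //=.
  by rewrite unbump_eq //; apply: contraNneq km => <-.
by rewrite -big_seq_cond sum_pred1_uniq ?fset_uniq // -cmE_neq0 drop_atE; case: eqP.
Qed.

Lemma divX_mmap k g : divX k g = mmap (fun c : int => c%:MP : Zx)
  (fun m : {cmonom nat} => if (0 < m k)%N then << divcm m (ucm k) >> else 0) g.
Proof.
rewrite /divX mmapE big_mkcond; apply: eq_bigr => m _.
case: (0 < m k)%N; last by rewrite mulr0.
rewrite malgM_def fgmulUU mulr1 mul1m; reflexivity.
Qed.

Lemma divXB k : {morph divX k : x y / x - y}.
Proof. by move=> x y; rewrite !divX_mmap mmapB. Qed.

Lemma divX_monom k (m : {cmonom nat}) :
  divX k << m >> = if (0 < m k)%N then << divcm m (ucm k) >> else 0.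
Proof. by rewrite divX_mmap mmapU /= mpolyC1E mul1r. Qed.

Lemma divX0 k : divX k 0 = 0.
Proof. by rewrite divX_mmap mmap0. Qed.

Lemma Top_monom k (m : {cmonom nat}) :
  represents (letter_act (Tl k) m) (Top k << m >>).
Proof.
have := Rop_monom k m; have := Rop_monom k.+1 m; rewrite /Top /=.
case: (m k =P 0%N) => m0; case: (m k.+1 =P 0%N) => m1 /=.
- move=> [D1 eD1 ->] [D0 eD0 ->] /=.
  have -> : D1 = D0.
    by apply/eqP/cmP => i; rewrite eD1 eD0 -(drop_at_succ (k := k)) // m0 m1.
  by rewrite subrr divX0.
- move=> -> [D0 eD0 ->] /=; exists (divcm D0 (ucm k)).
    by move=> i; rewrite divcmE ucmE eD0 merge_at_drop.
  rewrite divXB divX0 sub0r divX_monom eD0 /drop_at ltnn lt0n.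
  by move/eqP: m1 => ->.
- move=> [D1 eD1 ->] -> /=; exists (divcm D1 (ucm k)).
    by move=> i; rewrite divcmE ucmE eD1 merge_at_drop_succ.
  rewrite divXB divX0 subr0 divX_monom eD1 /drop_at ltnSn lt0n.
  by move/eqP: m0 => ->.
- by move=> -> ->; rewrite subrr divX0.
Qed.

Lemma op_monom l (m : {cmonom nat}) : represents (letter_act l m) (op l << m >>).
Proof. by case: l => k; [apply: Rop_monom | apply: Top_monom]. Qed.

Lemma RopB k : {morph Rop k : x y / x - y}.
Proof. by move=> x y; rewrite /Rop /subst mmapB. Qed.

Lemma subrBB (V : zmodType) (a b c d : V) : a - b - (c - d) = a - c - (b - d).
Proof. by rewrite !opprD !opprK addrACA. Qed.

Lemma opB l : {morph op l : x y / x - y}.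
Proof.
case: l => k x y; first exact: RopB.
by rewrite [op _]/= /Top !RopB -divXB; apply: (congr1 (divX k)); apply: subrBB.
Qed.

HB.instance Definition _ l := GRing.isZmodMorphism.Build Zx Zx (op l) (opB l).

Lemma PhiB w : {morph Phi w : x y / x - y}.
Proof. by elim: w => [|l w IH] x y //=; rewrite IH opB. Qed.

HB.instance Definition _ w := GRing.isZmodMorphism.Build Zx Zx (Phi w) (PhiB w).

Lemma op_signed l s g : op l (signed s g) = signed s (op l g).
Proof. by case: s => //=; rewrite raddfN. Qed.

Lemma signed_addb s s' g : signed s (signed s' g) = signed (s (+) s') g.
Proof. by case: s; case: s' => //=; rewrite opprK. Qed.

Lemma represents_op l r g :
  represents r g -> represents (sbind r (letter_act l)) (op l g).
Proof.
case: r => [[s b]|] /=; last by move->; rewrite raddf0.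
move=> [m mb ->]; rewrite -(functional_extensionality _ _ mb) op_signed.
have := op_monom l m; case: (letter_act l m) => [[s' c]|] /=.
- by move=> [m' m'c ->]; exists m' => //; rewrite signed_addb.
- by move->; case: s => /=; rewrite ?oppr0.
Qed.

Lemma Phi_monom w (m : {cmonom nat}) : represents (word_act w m) (Phi w << m >>).
Proof. by elim: w => [|l w IH] /=; [exists m | apply: represents_op]. Qed.

Lemma signed_coef s (m m' : {cmonom nat}) :
  (signed s << m >>)@_m' = (if s then - (m == m')%:R else (m == m')%:R : int).
Proof. by case: s; rewrite /= ?mcoeffN mcoeffU1. Qed.

Lemma represents_inj r r' g : represents r g -> represents r' g -> r = r'.
Proof.
case: r => [[s b]|]; case: r' => [[s' b']|] /=.
- move=> [m mb ->] [m' m'b' e]; have := signed_coef s m m.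
  rewrite e signed_coef eqxx; clear e.
  case: (eqVneq m' m) => [em|_]; last by case: s; case: s'.
  rewrite -(functional_extensionality _ _ mb) -(functional_extensionality _ _ m'b') em.
  by case: s; case: s'.
- move=> [m _ ->] e; have := signed_coef s m m.
  by rewrite e mcoeff0 eqxx; clear e; case: s.
- move=> -> [m _ e]; have := signed_coef s' m m.
  by rewrite -e mcoeff0 eqxx; clear e; case: s'.
- by [].
Qed.

Lemma represents_fun r g g' : represents r g -> represents r g' -> g = g'.
Proof.
case: r => [[s b]|] /=; last by move=> -> ->.
move=> [m mb ->] [m' m'b ->]; have -> // : m = m'.
by apply/eqP/cmP => i; rewrite mb m'b.
Qed.

Lemma Phi_monomZ w (c : int) (m : {cmonom nat}) :
  Phi w << c *g m >> = Phi w << m >> *~ c.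
Proof.
have -> : << c *g m >> = (<< m >> : Zx) *~ c.
  by rewrite -raddfMz /= -[X in << X *g _ >> = _]intz.
exact: raddfMz.
Qed.

Lemma Phi_eq_word_act w w' : (forall f, Phi w f = Phi w' f) <->
  (forall a, fin_supp a -> word_act w a = word_act w' a).
Proof.
split=> [eqPhi a fa | eqact f].
- have [M Ma] := cmonom_of_fin_supp fa.
  rewrite -(functional_extensionality _ _ Ma).
  apply: represents_inj (Phi_monom w M) _; rewrite eqPhi; exact: Phi_monom.
- rewrite (monalgE f) !raddf_sum; apply: eq_bigr => m _ /=.
  rewrite (Phi_monomZ w) (Phi_monomZ w'); apply: (congr1 (fun g => g *~ f@_m)).
  apply: represents_fun (Phi_monom w m) _.
  rewrite eqact; [exact: Phi_monom | exact: fin_supp_cmonom].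
Qed.

Lemma th_equiv_word_act w w' : th_equiv w w' <->
  (forall a, fin_supp a -> word_act w a = word_act w' a).
Proof.
split=> [eqw a _ | eqact]; first exact: th_equiv_act.
have eq_nf : nf w = nf w'.
  apply: sorted_word_act_inj; try exact: sorted_nf.
  move=> a fa.
  by rewrite -(th_equiv_act (th_equiv_nf w)) -(th_equiv_act (th_equiv_nf w')) eqact.
apply: rst_trans (th_equiv_nf w) _; rewrite eq_nf; exact/rst_sym/th_equiv_nf.
Qed.

Theorem mainTheorem4 (w w' : seq letter) :
  (forall f : Zx, Phi w f = Phi w' f) <-> th_equiv w w'.
Proof. exact: iff_trans (Phi_eq_word_act w w') (iff_sym (th_equiv_word_act w w')). Qed.
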